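(* Let $1\le k<n$ be integers and $K=\{p\in[0,1]^n:\sum_i p_i=k\}$. For $U\subseteq[n]$ with $|U|=k$ define $$g_U(x)=\frac{1}{n-k}\Big(\prod_{i\in U}x_i\Big)\Big(\prod_{i\notin U}(1-x_i)\Big)\Big(\sum_{i\notin U}x_i\Big),\qquad f_U(x)=\frac{g_U(x)}{\sum_{V\subseteq[n],|V|=k}g_V(x)},$$ and let $e_V\in\{0,1\}^n$ denote the indicator vector of $V$. Define $\overline f_U:K\to[0,1]$ by $\overline f_U(x)=f_U(x)$ if $x\in K$ is not of the form $e_V$ for any $V$ with $|V|=k$, $\overline f_U(e_U)=1$, and $\overline f_U(e_V)=0$ for $|V|=k$, $V\neq U$. Then $\overline f_U$ is well defined (i.e. the denominator of $f_U$ is nonzero at every point of $K$ not of the form $e_V$) and is continuous on all of $K$. *)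

(* Points of [0,1]^n are row vectors 'rV[R]_n
   (entries x 0 i), carrying the product topology from matrix_topology. *)
From HB Require Import structures.
From mathcomp Require Import all_boot all_order all_algebra.
From mathcomp Require Import all_classical all_reals all_analysis.
Set Implicit Arguments. Unset Strict Implicit. Unset Printing Implicit Defensive.
Import Order.TTheory GRing.Theory Num.Theory.
Import numFieldNormedType.Exports.
Local Open Scope ring_scope.
Local Open Scope classical_set_scope.

Section Defs.
Variables (R : realType) (n k : nat).

Definition Kset : set 'rV[R]_n :=
  [set p | (forall i : 'I_n, 0 <= p 0 i <= 1) /\ \sum_(i < n) p 0 i = k%:R].

Definition gU (U : {set 'I_n}) (x : 'rV[R]_n) : R :=
  ((n - k)%:R)^-1 * (\prod_(i in U) x 0 i) * (\prod_(i in ~: U) (1 - x 0 i))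
    * (\sum_(i in ~: U) x 0 i).

Definition gsum (x : 'rV[R]_n) : R := \sum_(V : {set 'I_n} | #|V| == k) gU V x.

Definition fU (U : {set 'I_n}) (x : 'rV[R]_n) : R := gU U x / gsum x.

Definition ind (V : {set 'I_n}) : 'rV[R]_n := \row_(i < n) (i \in V)%:R.

Definition is_vertex (x : 'rV[R]_n) : bool :=
  [exists V : {set 'I_n}, (#|V| == k) && (x == ind V)].

Definition fbarU (U : {set 'I_n}) (x : 'rV[R]_n) : R :=
  if is_vertex x then (if x == ind U then 1 else 0) else fU U x.

End Defs.

From HB Require Import structures.
From mathcomp Require Import all_boot all_order all_algebra.
From mathcomp Require Import all_classical all_reals all_analysis.
From mathcomp Require Import ring lra.
Import Order.TTheory GRing.Theory Num.Theory.
Import numFieldNormedType.Exports.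
Local Open Scope ring_scope.
Local Open Scope classical_set_scope.

(* Off the vertices the denominator is positive: a point x of K that is not a
   vertex has at most k coordinates equal to 1 and more than k nonzero ones, so
   some k-set V in between makes every factor of g_V(x) positive.  Near a vertex
   e_V put s = sum_(i notin V) x_i, which on K equals sum_(i in V) (1 - x_i).
   Every g_W with W <> V contains a factor x_j (j in W \ V) and a factor
   1 - x_i (i in V \ W), both at most s, so g_W = O(s^2), whereas
   g_V >= s / (2 (n - k)) near e_V.  Hence f_V = 1 - O(s) and f_W = O(s). *)

Lemma subset_card_between {T : finType} {A B : {set T}} {m : nat} :
  A \subset B -> (#|A| <= m <= #|B|)%N ->
  exists V : {set T}, [/\ A \subset V, V \subset B & #|V| = m].
Proof.
move=> sAB /andP[leAm lemB]; rewrite -(subnKC leAm) in lemB *.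
elim: (m - #|A|)%N lemB => [|d IHd] ledB; first by exists A; rewrite addn0.
rewrite addnS in ledB; have [V [sAV sVB cardV]] := IHd (ltnW ledB).
have /fintype.subsetPn[c Bc Vc] : ~~ (B \subset V).
  by apply: contraTN ledB => /subset_leq_card; rewrite cardV -leqNgt.
exists (c |: V); split.
- exact: fintype.subset_trans sAV (subsetU1 c V).
- by rewrite finset.subUset finset.sub1set Bc.
- by rewrite cardsU1 Vc cardV add1n addnS.
Qed.

Lemma exists_setD_card_eq {T : finType} {V W : {set T}} :
  #|V| = #|W| -> W != V -> exists2 j, j \in W & j \notin V.
Proof.
move=> cVW neWV; apply/fintype.subsetPn; apply: contra neWV => sWV.
by rewrite finset.eqEcard sWV cVW leqnn.
Qed.

Lemma ler_sum_term (R : numDomainType) (I : finType) (P : pred I) (F : I -> R) j :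
  (forall i, P i -> 0 <= F i) -> P j -> F j <= \sum_(i | P i) F i.
Proof.
move=> F_ge0 Pj; rewrite (bigD1 j) //= lerDl.
by apply: sumr_ge0 => i /andP[Pi _]; exact: F_ge0.
Qed.

Lemma ler_prod_factor (R : numDomainType) (I : finType) (P : pred I) (F : I -> R) j :
  (forall i, P i -> 0 <= F i <= 1) -> P j -> \prod_(i | P i) F i <= F j.
Proof.
move=> F01 Pj; rewrite (bigD1 j) //=; have /andP[Fj_ge0 _] := F01 j Pj.
by apply: ler_piMr => //; apply: prodr_ile1 => i /andP[Pi _]; exact: F01.
Qed.

Lemma sumr_setC {M : nmodType} {I : finType} (A : {set I}) (F : I -> M) :
  \sum_i F i = \sum_(i in A) F i + \sum_(i in ~: A) F i.
Proof.
by rewrite (bigID (mem A)) /=; congr (_ + _); apply: eq_bigl => i; rewrite inE.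
Qed.

Lemma sum_continuous (K : numFieldType) (T : topologicalType) (I : finType)
    (P : pred I) (F : I -> T -> K) :
  (forall i, continuous (F i)) -> continuous (fun x => \sum_(i | P i) F i x).
Proof.
by move=> cF; apply: continuous_big => [|i _]; [exact: add_continuous | exact: cF].
Qed.

Lemma prod_continuous (K : numFieldType) (T : topologicalType) (I : finType)
    (P : pred I) (F : I -> T -> K) :
  (forall i, continuous (F i)) -> continuous (fun x => \prod_(i | P i) F i x).
Proof.
by move=> cF; apply: continuous_big => [|i _]; [exact: mul_continuous | exact: cF].
Qed.

Section Simplex.
Variables (R : realType) (n k : nat).
Implicit Types (U V W : {set 'I_n}) (x y : 'rV[R]_n).

Definition weight V y : R := \prod_(i in V) y 0 i * \prod_(i in ~: V) (1 - y 0 i).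

Definition mass_out V y : R := \sum_(i in ~: V) y 0 i.

Lemma gUE V y : gU k V y = (n - k)%:R^-1 * weight V y * mass_out V y.
Proof. by rewrite /gU /weight /mass_out !mulrA. Qed.

Lemma weight_continuous V : continuous (weight V).
Proof.
have cP : continuous (fun y : 'rV[R]_n => \prod_(i in V) y 0 i).
  by apply: prod_continuous => i; exact: coord_continuous.
have cQ : continuous (fun y : 'rV[R]_n => \prod_(i in ~: V) (1 - y 0 i)).
  apply: prod_continuous => i z.
  by apply: continuousB; [exact: cst_continuous | exact: coord_continuous].
by move=> x; apply: continuousM; [exact: cP | exact: cQ].
Qed.

Lemma mass_out_continuous V : continuous (mass_out V).
Proof. by apply: sum_continuous => i; exact: coord_continuous. Qed.

Lemma gU_continuous V : continuous (@gU R n k V).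
Proof.
have -> : @gU R n k V = (fun y => (n - k)%:R^-1 * weight V y) \* mass_out V.
  by apply/funext => y; rewrite /= gUE.
move=> x; apply: continuousM; last exact: mass_out_continuous.
by apply: continuousM; [exact: cst_continuous | exact: weight_continuous].
Qed.

Lemma gsum_continuous : continuous (@gsum R n k).
Proof. by apply: sum_continuous => V; exact: gU_continuous. Qed.

Section Cube.
Context {y : 'rV[R]_n}.
Hypothesis y01 : forall i, 0 <= y 0 i <= 1.

Lemma coord_ge0 i : 0 <= y 0 i.
Proof. by case/andP: (y01 i). Qed.

Lemma subr_coord_ge0 i : 0 <= 1 - y 0 i.
Proof. by case/andP: (y01 i) => _; rewrite subr_ge0. Qed.

Lemma weight_ge0 V : 0 <= weight V y.
Proof.
by apply: mulr_ge0; apply: prodr_ge0 => i _; [exact: coord_ge0 | exact: subr_coord_ge0].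
Qed.

Lemma mass_out_ge0 V : 0 <= mass_out V y.
Proof. by apply: sumr_ge0 => i _; exact: coord_ge0. Qed.

Lemma gU_ge0 V : 0 <= gU k V y.
Proof.
rewrite gUE; apply: mulr_ge0; last exact: mass_out_ge0.
by apply: mulr_ge0; [rewrite invr_ge0 | exact: weight_ge0].
Qed.

Lemma gU_le_gsum V : #|V| = k -> gU k V y <= gsum k y.
Proof. by move=> cV; apply: ler_sum_term => [W _|]; [exact: gU_ge0 | rewrite cV]. Qed.

Lemma gU_gt0 V : (k < n)%N ->
  {in V, forall i, 0 < y 0 i} -> {in ~: V, forall i, y 0 i < 1} ->
  (exists2 j, j \notin V & 0 < y 0 j) -> 0 < gU k V y.
Proof.
move=> ltkn y_gt0 y_lt1 [j Vj yj_gt0]; rewrite gUE; apply: mulr_gt0.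
  apply: mulr_gt0; first by rewrite invr_gt0 ltr0n subn_gt0.
  apply: mulr_gt0; apply: prodr_gt0 => i; first exact: y_gt0.
  by move/y_lt1; rewrite subr_gt0.
apply: lt_le_trans yj_gt0 _; apply: ler_sum_term => [i _|]; first exact: coord_ge0.
by rewrite inE.
Qed.

End Cube.

Definition one_coords y : {set 'I_n} := [set i | y 0 i == 1]%SET.

Definition nz_coords y : {set 'I_n} := [set i | y 0 i != 0]%SET.

Section PointOfK.
Context {y : 'rV[R]_n}.
Hypothesis Ky : Kset k y.

Lemma mass_outE V : #|V| = k -> mass_out V y = \sum_(i in V) (1 - y 0 i).
Proof.
move=> cV; have := Ky.2; rewrite (sumr_setC V) sumrB sumr_const cV /mass_out.
by move=> <-; rewrite addrC addKr.
Qed.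

Lemma card_one_coords_le : (#|one_coords y| <= k)%N.
Proof.
set A := one_coords y; rewrite -(ler_nat R) -Ky.2 (sumr_setC A).
have -> : #|A|%:R = \sum_(i in A) y 0 i.
  by rewrite -sumr_const; apply: eq_bigr => i; rewrite inE => /eqP.
by rewrite lerDl; apply: mass_out_ge0; exact: Ky.1.
Qed.

Lemma card_nz_coords_gt : ~~ is_vertex k y -> (k < #|nz_coords y|)%N.
Proof.
set B := nz_coords y => not_vertex; rewrite ltnNge; apply/negP => leBk.
have sum_yB : \sum_(i in B) y 0 i = k%:R.
  rewrite -Ky.2 (sumr_setC B) [X in _ = _ + X]big1 ?addr0 // => i.
  by rewrite !inE negbK => /eqP.
have sumB : \sum_(i in B) (1 - y 0 i) = #|B|%:R - k%:R.
  by rewrite sumrB sumr_const sum_yB.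
have sumB0 : \sum_(i in B) (1 - y 0 i) = 0.
  apply/eqP; rewrite eq_le {1}sumB subr_le0 ler_nat leBk /=.
  by apply: sumr_ge0 => i _; exact: subr_coord_ge0 Ky.1 i.
have cB : #|B| = k by apply/eqP; rewrite -(eqr_nat R) -subr_eq0 -sumB sumB0.
case/negP: not_vertex; apply/existsP; exists B; rewrite cB eqxx /=.
apply/eqP/rowP => i; rewrite mxE.
have [Bi|] := boolP (i \in B); last by rewrite inE negbK => /eqP.
apply/eqP; rewrite eq_sym -subr_eq0; apply/eqP.
by apply: (psumr_eq0P _ sumB0) => // l _; exact: subr_coord_ge0 Ky.1 l.
Qed.

Lemma gsum_gt0 : (k < n)%N -> ~~ is_vertex k y -> 0 < gsum k y.
Proof.
move=> ltkn not_vertex.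
set A := one_coords y; set B := nz_coords y.
have ltkB := card_nz_coords_gt not_vertex.
have sAB : A \subset B.
  by apply/fintype.subsetP => i; rewrite !inE => /eqP ->; exact: oner_neq0.
have : (#|A| <= k <= #|B|)%N by rewrite card_one_coords_le ltnW.
case/(subset_card_between sAB) => V [sAV sVB cV].
have /fintype.subsetPn[j Bj Vj] : ~~ (B \subset V).
  by apply: contraTN ltkB => /subset_leq_card; rewrite cV -leqNgt.
have y_gt0 : {in B, forall i, 0 < y 0 i}.
  by move=> i; rewrite inE lt0r => ->; exact: coord_ge0 Ky.1 i.
apply: (lt_le_trans _ (gU_le_gsum Ky.1 V cV)); apply: (gU_gt0 Ky.1) => //.
- by move=> i /(fintype.subsetP sVB); exact: y_gt0.
- move=> i; rewrite inE => /(contra (fintype.subsetP sAV i)); rewrite inE lt_neqAle => ->.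
  by case/andP: (Ky.1 i).
- by exists j => //; exact: y_gt0.
Qed.

Lemma gU_le_sqr_mass_out V W : #|V| = k -> #|W| = k -> W != V ->
  gU k W y <= (n - k)%:R^-1 * k%:R * mass_out V y ^+ 2.
Proof.
move=> cV cW neWV; have y01 := Ky.1.
have [j Wj Vj] := exists_setD_card_eq (etrans cV (esym cW)) neWV.
have [i Vi Wi] : exists2 i, i \in V & i \notin W.
  by apply: exists_setD_card_eq; rewrite ?cV ?cW // eq_sym.
have le_j : y 0 j <= mass_out V y.
  by apply: ler_sum_term => [l _|]; [exact: coord_ge0 | rewrite inE].
have le_i : 1 - y 0 i <= mass_out V y.
  by rewrite mass_outE //; apply: ler_sum_term => // l _; exact: subr_coord_ge0.
have le_weight : weight W y <= mass_out V y ^+ 2.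
  rewrite expr2; apply: ler_pM.
  - by apply: prodr_ge0 => l _; exact: coord_ge0.
  - by apply: prodr_ge0 => l _; exact: subr_coord_ge0.
  - by apply: le_trans le_j; apply: ler_prod_factor Wj => l _; exact: y01.
  - apply: le_trans le_i; apply: ler_prod_factor => [l _|]; last by rewrite inE.
    by rewrite subr_coord_ge0 //= lerBlDr lerDl coord_ge0.
have le_mass : mass_out W y <= k%:R.
  by rewrite -Ky.2 (sumr_setC W) lerDr; apply: sumr_ge0 => l _; exact: coord_ge0.
rewrite gUE [X in _ <= X]mulrAC; apply: ler_pM => //.
- by rewrite mulr_ge0 ?invr_ge0 // weight_ge0.
- exact: mass_out_ge0.
- by rewrite ler_wpM2l ?invr_ge0.
Qed.

End PointOfK.

Lemma ind_inj : injective (@ind R n).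
Proof.
move=> V W eVW; apply/setP => i.
have := congr1 (fun M : 'rV[R]_n => M 0 i) eVW; rewrite !mxE => /eqP.
by rewrite eqr_nat; case: (i \in V); case: (i \in W).
Qed.

Lemma is_vertexP y :
  reflect (exists2 W : {set 'I_n}, #|W| = k & y = ind R W) (is_vertex k y).
Proof.
apply: (iffP existsP) => [[W /andP[/eqP cW /eqP ->]]|[W cW ->]]; first by exists W.
by exists W; rewrite cW !eqxx.
Qed.

Lemma fbarU_ind U V : #|V| = k -> fbarU k U (ind R V) = (V == U)%:R.
Proof.
move=> cV; rewrite /fbarU ifT; last by apply/is_vertexP; exists V.
by rewrite (inj_eq ind_inj); case: (V == U).
Qed.

Lemma weight_ind V : weight V (ind R V) = 1.
Proof.
rewrite /weight !big1 ?mulr1 // => i; rewrite ?inE mxE; last by move=> ->.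
by move=> /negbTE ->; rewrite subr0.
Qed.

Lemma weight_ind_neq V W : #|V| = #|W| -> W != V -> weight V (ind R W) = 0.
Proof.
move=> cVW neWV; have [i Vi Wi] : exists2 i, i \in V & i \notin W.
  by apply: exists_setD_card_eq; rewrite // eq_sym.
by rewrite /weight (bigD1 i) //= mxE (negbTE Wi) !mul0r.
Qed.

Lemma mass_out_ind V : mass_out V (ind R V) = 0.
Proof. by rewrite /mass_out big1 // => i; rewrite inE mxE => /negbTE ->. Qed.

Lemma gsum_ind W : #|W| = k -> gsum k (ind R W) = 0.
Proof.
move=> cW; rewrite /gsum big1 // => V /eqP cV; rewrite gUE.
have [->|neVW] := eqVneq V W; first by rewrite mass_out_ind mulr0.
by rewrite weight_ind_neq ?cV ?cW 1?eq_sym // mulr0 mul0r.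
Qed.

Lemma fbarU_ge0_le1 U x : (k < n)%N -> #|U| = k -> Kset k x ->
  0 <= fbarU k U x <= 1.
Proof.
move=> ltkn cU Kx; rewrite /fbarU; case: ifPn => [_|not_vertex].
  by case: ifP; rewrite ?ler01 ?lexx.
have g_gt0 := gsum_gt0 Kx ltkn not_vertex.
rewrite /fU; apply/andP; split; first by rewrite divr_ge0 ?(gU_ge0 Kx.1) ?ltW.
by rewrite ler_pdivrMr // mul1r (gU_le_gsum Kx.1).
Qed.

Definition gsum_others V y : R :=
  \sum_(W : {set 'I_n} | (#|W| == k) && (W != V)) gU k W y.

(* 2 from [1 / 2 <= weight V y], k from [mass_out W y <= k], and 'C(n, k)
   bounds the number of terms of [gsum_others]. *)
Definition vertex_const : R := (2 * k * 'C(n, k))%:R.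

Lemma gsum_others_le V y : Kset k y -> #|V| = k -> 1 / 2 <= weight V y ->
  gsum_others V y <= vertex_const * mass_out V y * gsum k y.
Proof.
move=> Ky cV half_le_w; set s := mass_out V y; set c : R := (n - k)%:R^-1.
have s_ge0 : 0 <= s := mass_out_ge0 Ky.1 V.
have c_ge0 : 0 <= c by rewrite invr_ge0.
have le_gV : c * s ^+ 2 <= 2 * s * gU k V y.
  rewrite gUE -/s -/c.
  have -> : 2 * s * (c * weight V y * s) = c * s ^+ 2 * (2 * weight V y) by ring.
  by apply: ler_peMr; [rewrite mulr_ge0 ?exprn_ge0 | lra].
have le_sum : gsum_others V y <= (k * 'C(n, k))%:R * (c * s ^+ 2).
  apply: (@le_trans _ _
    (\sum_(W : {set 'I_n} | (#|W| == k) && (W != V)) c * k%:R * s ^+ 2)).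
    by apply: ler_sum => W /andP[/eqP cW neWV]; exact: gU_le_sqr_mass_out.
  apply: (@le_trans _ _ (\sum_(W : {set 'I_n} | #|W| == k) c * k%:R * s ^+ 2)).
    by rewrite [X in _ <= X](bigD1 V) ?cV //= lerDr !mulr_ge0 ?exprn_ge0.
  have -> : \sum_(W : {set 'I_n} | #|W| == k) c * k%:R * s ^+ 2
      = c * k%:R * s ^+ 2 *+ 'C(n, k).
    rewrite -[in RHS](card_ord n) -card_draws -sumr_const.
    by apply: eq_bigl => W; rewrite inE.
  by rewrite le_eqVlt -mulr_natr natrM; apply/orP; left; apply/eqP; ring.
apply: le_trans le_sum _.
have -> : vertex_const * s * gsum k y = (k * 'C(n, k))%:R * (2 * s * gsum k y).
  by rewrite /vertex_const -mulnA natrM; ring.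
apply: ler_wpM2l => //; apply: le_trans le_gV _.
by apply: ler_wpM2l; [rewrite mulr_ge0 | exact: gU_le_gsum Ky.1 V cV].
Qed.

Lemma dist_fU_le U V y : (forall i, 0 <= y 0 i <= 1) -> #|U| = k -> #|V| = k ->
  0 < gsum k y ->
  `|(V == U)%:R - fU k U y|
    <= gsum_others V y / gsum k y.
Proof.
move=> y01 cU cV g_gt0; set T := gsum_others V y.
have gsumE : gsum k y = gU k V y + T by rewrite /gsum (bigD1 V) ?cV.
have T_ge0 : 0 <= T by apply: sumr_ge0 => W _; exact: gU_ge0.
rewrite /fU; have [<-|neVU] := eqVneq V U.
  have -> : 1 - gU k V y / gsum k y = T / gsum k y.
    by rewrite gsumE; field; rewrite -gsumE gt_eqF.
  by rewrite ger0_norm ?lexx // divr_ge0 // ltW.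
rewrite sub0r normrN ger0_norm; last by rewrite divr_ge0 ?(gU_ge0 y01) // ltW.
rewrite ler_pM2r ?invr_gt0 //; apply: ler_sum_term => [W _|]; first exact: gU_ge0.
by rewrite cU eqxx eq_sym.
Qed.

Lemma dist_fbarU_le U V y : (k < n)%N -> #|U| = k -> #|V| = k ->
  Kset k y -> 1 / 2 <= weight V y ->
  `|(V == U)%:R - fbarU k U y| <= vertex_const * mass_out V y.
Proof.
move=> ltkn cU cV Ky half_le_w.
have [/is_vertexP[W cW eyW]|not_vertex] := boolP (is_vertex k y).
  subst y; have [->|neWV] := eqVneq W V.
    by rewrite fbarU_ind // subrr normr0 mass_out_ind mulr0.
  by move: half_le_w; rewrite weight_ind_neq ?cV ?cW //; lra.
have g_gt0 := gsum_gt0 Ky ltkn not_vertex.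
rewrite /fbarU (negbTE not_vertex); apply: le_trans (dist_fU_le U V y Ky.1 cU cV g_gt0) _.
by rewrite ler_pdivrMr //; exact: gsum_others_le.
Qed.

Lemma fU_near_fbarU U x : 0 < gsum k x -> \forall y \near x, fU k U y = fbarU k U y.
Proof.
move=> g_gt0; apply: filterS (cvgr_gt _ (gsum_continuous x) _ g_gt0) => y gy.
have not_vertex : ~~ is_vertex k y.
  by apply/negP => /is_vertexP[W cW eyW]; move: gy; rewrite eyW gsum_ind // ltxx.
by rewrite /fbarU (negbTE not_vertex).
Qed.

Lemma fbarU_continuous_at U x : 0 < gsum k x -> {for x, continuous (@fbarU R n k U)}.
Proof.
move=> g_gt0; have fU_near := fU_near_fbarU U x g_gt0.
have fU_cvg : fU k U y @[y --> x] --> fU k U x.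
  exact: cvgM (gU_continuous U x) (cvgV (lt0r_neq0 g_gt0) (gsum_continuous x)).
rewrite /prop_for /continuous_at -(nbhs_singleton fU_near).
exact: cvg_trans (near_eq_cvg fU_near) fU_cvg.
Qed.

Lemma dist_fbarU_near_ind U V eps : (k < n)%N -> #|U| = k -> #|V| = k -> 0 < eps ->
  \forall y \near ind R V, Kset k y -> `|(V == U)%:R - fbarU k U y| <= eps.
Proof.
move=> ltkn cU cV eps_gt0.
have weight_near : \forall y \near ind R V, 1 / 2 < weight V y.
  by apply: (cvgr_gt _ (weight_continuous V _)); rewrite weight_ind; lra.
have mass_near : \forall y \near ind R V, vertex_const * mass_out V y < eps.
  apply: (cvgr_lt _ (cvgM (cvg_cst _) (mass_out_continuous V _))).
  by rewrite mass_out_ind mulr0.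
apply: filterS2 weight_near mass_near => y /ltW half_le_w /ltW le_eps Ky.
exact: le_trans (dist_fbarU_le U V y ltkn cU cV Ky half_le_w) le_eps.
Qed.

Lemma fbarU_continuous U : (k < n)%N -> #|U| = k ->
  {within Kset k, continuous (@fbarU R n k U)}.
Proof.
move=> ltkn cU; apply/subspace_continuousP => x Kx; rewrite /from_subspace.
have [/is_vertexP[V cV ->]|not_vertex] := boolP (is_vertex k x).
  apply/cvgrPdist_le => eps eps_gt0; rewrite near_withinE fbarU_ind //.
  exact: dist_fbarU_near_ind.
by apply: cvg_within_filter; apply: fbarU_continuous_at; exact: gsum_gt0.
Qed.

End Simplex.

Theorem lemma9 (R : realType) (n k : nat) (U : {set 'I_n}) :
  (1 <= k)%N -> (k < n)%N -> #|U| = k ->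
  (forall x : 'rV[R]_n, @Kset R n k x ->
     (forall V : {set 'I_n}, #|V| = k -> x <> ind R V) ->
     @gsum R n k x != 0)
  /\ (forall x : 'rV[R]_n, @Kset R n k x -> 0 <= @fbarU R n k U x <= 1)
  /\ {within @Kset R n k, continuous (@fbarU R n k U)}.
Proof.
move=> _ ltkn cU; split; last split.
- move=> x Kx not_ind; rewrite lt0r_neq0 // gsum_gt0 //.
  by apply/negP => /is_vertexP[V cV exV]; exact: not_ind V cV exV.
- by move=> x; exact: fbarU_ge0_le1.
- exact: fbarU_continuous.
Qed.
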